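(* The Takagi function $T$ has a local maximum at $x\in\mathbb{R}$ if and only if $x\in\mathcal{A}$ and $c_x=0$.
   Context: Let $\phi(x)=\operatorname{dist}(x,\mathbb{Z})$ and $T(x)=\sum_{n=0}^\infty 2^{-n}\phi(2^nx)$. Let $D$ be the set of dyadic rationals. Every $x$ is written $x=k+\sum_{n\ge1}a_n2^{-n}$, $k\in\mathbb{Z}$, $a_n\in\{0,1\}$. $\mathcal{A}=\{x:\partial^+T(x)\neq\varnothing\}$, which equals the set of $x\notin D$ for which there exists $m\ge1$ with $a_{m+2i}+a_{m+2i+1}=1$ for all $i\ge0$; for such $x$ and such $m$, $c_x=m-1-2\sum_{j=1}^{m-1}a_j$ (independent of the choice of $m$). Here $\partial^+f(x)=\{\xi\in\mathbb{R}: \limsup_{h\to0}\frac{f(x+h)-f(x)-\xi h}{|h|}\le0\}$ is the Fréchet superdifferential. *)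

From Stdlib Require Import Reals ZArith Lra Lia.
Open Scope R_scope.

Definition floorZ (x : R) : Z := Int_part x.

Definition phi (x : R) : R :=
  Rmin (x - IZR (floorZ x)) (IZR (floorZ x) + 1 - x).

Definition takagi_term (x : R) (n : nat) : R := (/ 2) ^ n * phi (2 ^ n * x).

Definition dyadic (x : R) : Prop :=
  exists (k : Z) (n : nat), x = IZR k / 2 ^ n.

(* n-th binary digit a_n (n >= 1) of x = k + sum_{n>=1} a_n 2^{-n}:
   a_n = floor(2^n x) mod 2  (unambiguous for non-dyadic x). *)
Definition digit (x : R) (n : nat) : Z := Z.modulo (floorZ (2 ^ n * x)) 2.

Fixpoint digit_sum (x : R) (N : nat) : Z :=
  match N with
  | O => 0%Z
  | S N' => (digit_sum x N' + digit x (S N'))%Z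
  end.

Definition pair_cond (x : R) (m : nat) : Prop :=
  (1 <= m)%nat /\
  forall i : nat, (digit x (m + 2 * i) + digit x (m + 2 * i + 1))%Z = 1%Z.

Definition in_A (x : R) : Prop := ~ dyadic x /\ exists m : nat, pair_cond x m.

Definition c_with (x : R) (m : nat) : Z :=
  (Z.of_nat m - 1 - 2 * digit_sum x (m - 1))%Z.

Definition local_max (f : R -> R) (x : R) : Prop :=
  exists delta : R, 0 < delta /\
    forall y : R, Rabs (y - x) < delta -> f y <= f x.

From Stdlib Require Import Reals ZArith Lra Lia.
Open Scope R_scope.

(* On the dyadic interval of level n containing x, the first n terms of the
   Takagi series are affine with slope D_n = n - 2 (a_1 + ... + a_n).
   Reflecting a non-dyadic x in the midpoint of that interval leaves all later
   terms unchanged, so at a local maximum the partial sum must not increase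
   towards that midpoint for any large n; hence |D_n| drops to at most 1, and
   by parity D_n = 0 at every large even n, which is the pairing condition
   with c_x = 0.
   Conversely, when a_(k+1) + a_(k+2) = 1 the terms k and k+1 together are as
   large as they can be at any point (phi z + phi (2 z) / 2 <= 1/2, with
   equality there), so once D_(m-1) = 0 no nearby point does better.
   Dyadic points are excluded because T increases to their right at
   arbitrarily small scales. *)

Lemma floorZ_spec z : IZR (floorZ z) <= z < IZR (floorZ z) + 1.
Proof. unfold floorZ. destruct (base_Int_part z). lra. Qed.

Lemma floorZ_unique q z : IZR q <= z < IZR q + 1 -> floorZ z = q.
Proof.
  intros [H1 H2]. unfold floorZ, Int_part.
  rewrite <- (up_tech z q H1); [ring | rewrite plus_IZR; simpl; lra].
Qed.

Lemma Zmod2_cases q : (q mod 2 = 0 \/ q mod 2 = 1)%Z.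
Proof. pose proof (Z.mod_pos_bound q 2 ltac:(lia)). lia. Qed.

Lemma floorZ_half z : floorZ z = (floorZ (2 * z) / 2)%Z.
Proof.
  destruct (floorZ_spec (2 * z)) as [F1 F2].
  set (q := floorZ (2 * z)) in *.
  assert (Eq : IZR q = 2 * IZR (q / 2) + IZR (q mod 2)).
  { rewrite (Z.div_mod q 2) at 1 by lia. rewrite plus_IZR, mult_IZR. reflexivity. }
  assert (0 <= IZR (q mod 2) <= 1) by (destruct (Zmod2_cases q) as [r | r]; rewrite r; lra).
  apply floorZ_unique. lra.
Qed.

Lemma floorZ_double z : floorZ (2 * z) = (2 * floorZ z + floorZ (2 * z) mod 2)%Z.
Proof. rewrite (floorZ_half z). apply Z.div_mod. lia. Qed.

Lemma phi_on_cell q z : IZR q <= z <= IZR q + 1 ->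
  phi z = Rmin (z - IZR q) (IZR q + 1 - z).
Proof.
  intros [H1 H2]. unfold phi. destruct (floorZ_spec z) as [F1 F2].
  set (F := floorZ z) in *.
  assert (A : (q < F + 1)%Z) by (apply lt_IZR; rewrite plus_IZR; simpl; lra).
  assert (B : (F <= q + 1)%Z) by (apply le_IZR; rewrite plus_IZR; simpl; lra).
  destruct (Z.eq_dec F q) as [-> | NE]; [reflexivity |].
  assert (EF : F = (q + 1)%Z) by lia. rewrite EF, plus_IZR in *.
  assert (z = IZR q + 1) by lra. subst z.
  unfold Rmin; repeat destruct Rle_dec; lra.
Qed.

Lemma phi_IZR_add q t : phi (IZR q + t) = phi t.
Proof.
  destruct (floorZ_spec t).
  rewrite (phi_on_cell (q + floorZ t)) by (rewrite plus_IZR; lra).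
  unfold phi. rewrite plus_IZR. f_equal; ring.
Qed.

Lemma phi_opp t : phi (- t) = phi t.
Proof.
  destruct (floorZ_spec t).
  rewrite (phi_on_cell (- floorZ t - 1)) by (rewrite minus_IZR, opp_IZR; lra).
  unfold phi. rewrite minus_IZR, opp_IZR, Rmin_comm. f_equal; ring.
Qed.

Lemma phi_IZR_add_small q t : 0 <= t <= 1/2 -> phi (IZR q + t) = t.
Proof.
  intros H. rewrite (phi_on_cell q) by lra. unfold Rmin; destruct Rle_dec; lra.
Qed.

Lemma phi_IZR q : phi (IZR q) = 0.
Proof. rewrite <- (Rplus_0_r (IZR q)). apply phi_IZR_add_small. lra. Qed.

Lemma phi_affine_on_half_cell z w : floorZ (2 * z) = floorZ (2 * w) ->
  phi w - phi z = (1 - 2 * IZR (floorZ (2 * z) mod 2)) * (w - z).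
Proof.
  intros E.
  assert (Fw : floorZ w = floorZ z) by now rewrite (floorZ_half w), (floorZ_half z), E.
  pose proof (floorZ_double z) as Dz.
  destruct (floorZ_spec (2 * z)), (floorZ_spec (2 * w)).
  rewrite <- E in *. unfold phi. rewrite Fw.
  set (F := floorZ z) in *. set (q := floorZ (2 * z)) in *.
  destruct (Zmod2_cases q) as [r | r]; rewrite r in *; rewrite Dz in *;
    rewrite plus_IZR, mult_IZR in *; unfold Rmin; repeat destruct Rle_dec; lra.
Qed.

Lemma phi_pair_le z : phi z + phi (2 * z) / 2 <= 1/2.
Proof.
  pose proof (floorZ_double z) as Dz.
  destruct (floorZ_spec z), (floorZ_spec (2 * z)).
  unfold phi. set (F := floorZ z) in *. set (q := floorZ (2 * z)) in *.
  destruct (Zmod2_cases q) as [r | r]; rewrite r in *; rewrite Dz in *;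
    rewrite plus_IZR, mult_IZR in *; unfold Rmin; repeat destruct Rle_dec; lra.
Qed.

Lemma phi_pair_alternating z :
  (floorZ (2 * z) mod 2 + floorZ (2 * (2 * z)) mod 2 = 1)%Z ->
  phi z + phi (2 * z) / 2 = 1/2.
Proof.
  intros H.
  pose proof (floorZ_double z) as Dz. pose proof (floorZ_double (2 * z)) as Dz2.
  destruct (floorZ_spec z), (floorZ_spec (2 * z)), (floorZ_spec (2 * (2 * z))).
  unfold phi.
  set (F := floorZ z) in *. set (q := floorZ (2 * z)) in *.
  set (q2 := floorZ (2 * (2 * z))) in *.
  destruct (Zmod2_cases q) as [r | r];
    [assert (r2 : (q2 mod 2 = 1)%Z) by lia | assert (r2 : (q2 mod 2 = 0)%Z) by lia];
    rewrite r2 in Dz2; rewrite r in Dz; rewrite Dz2 in *; rewrite Dz in *;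
    rewrite ?plus_IZR, ?mult_IZR, ?plus_IZR, ?mult_IZR in *;
    unfold Rmin; repeat destruct Rle_dec; lra.
Qed.

Fixpoint partial_sum (f : nat -> R) (n : nat) : R :=
  match n with O => 0 | S n' => partial_sum f n' + f n' end.

Lemma sum_f_R0_partial_sum f n : sum_f_R0 f n = partial_sum f (S n).
Proof. induction n as [| n IH]; simpl in *; [ring | rewrite IH; ring]. Qed.

Lemma infinite_sum_minus a b A B : infinite_sum a A -> infinite_sum b B ->
  infinite_sum (fun k => a k - b k) (A - B).
Proof.
  intros Ha Hb eps Heps. destruct (CV_minus _ _ _ _ Ha Hb eps Heps) as [N HN].
  exists N. intros n Hn. rewrite minus_sum. auto.
Qed.

Lemma infinite_sum_eventually_zero e l M : infinite_sum e l ->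
  (forall k, (M <= k)%nat -> e k = 0) -> l = partial_sum e M.
Proof.
  intros Hl Hzero. apply (uniqueness_sum e); [exact Hl |].
  assert (Hconst : forall i, partial_sum e (M + i) = partial_sum e M).
  { induction i as [| i IH]; [now rewrite Nat.add_0_r |].
    rewrite Nat.add_succ_r. simpl. rewrite IH, Hzero by lia. ring. }
  intros eps Heps. exists M. intros n Hn.
  rewrite sum_f_R0_partial_sum. replace (S n) with (M + (S n - M))%nat by lia.
  rewrite Hconst. unfold Rdist. rewrite Rminus_diag, Rabs_R0. lra.
Qed.

Lemma infinite_sum_nonpos_often e l : infinite_sum e l ->
  (forall N, exists n, (N <= n)%nat /\ partial_sum e n <= 0) -> l <= 0.
Proof.
  intros Hl Hoften. destruct (Rle_dec l 0) as [| Hpos]; [assumption |].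
  destruct (Hl l ltac:(lra)) as [N HN]. destruct (Hoften (S N)) as [[| n] [Hn Hsum]]; [lia |].
  specialize (HN n ltac:(lia)). rewrite sum_f_R0_partial_sum in HN.
  unfold Rdist in HN. apply Rabs_def2 in HN. lra.
Qed.

Lemma partial_sum_pairs_nonpos e p : partial_sum e p <= 0 ->
  (forall i, e (p + 2 * i)%nat + e (S (p + 2 * i)) <= 0) ->
  forall i, partial_sum e (p + 2 * i) <= 0.
Proof.
  intros H0 Hpair. induction i as [| i IH]; [now rewrite Nat.mul_0_r, Nat.add_0_r |].
  replace (p + 2 * S i)%nat with (S (S (p + 2 * i))) by lia.
  specialize (Hpair i). revert IH Hpair. generalize (p + 2 * i)%nat. intros n. simpl. lra.
Qed.

Lemma pow_inv2_lt delta : 0 < delta -> exists N, forall k, (N <= k)%nat -> (/ 2) ^ k < delta.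
Proof.
  intros Hd. destruct (pow_lt_1_zero (/ 2) ltac:(rewrite Rabs_right; lra) delta Hd) as [N HN].
  exists N. intros k Hk. specialize (HN k Hk).
  rewrite Rabs_right in HN by (apply Rle_ge, pow_le; lra). exact HN.
Qed.

Lemma pow_inv2_le_half r : (/ 2) ^ S r <= 1/2.
Proof.
  assert (Hle1 : forall r, (/ 2) ^ r <= 1).
  { induction r0 as [| r0 IH]; simpl; [lra |].
    assert (0 <= (/ 2) ^ r0) by (apply pow_le; lra). lra. }
  specialize (Hle1 r). simpl. lra.
Qed.

Lemma pow_inv2_mul_pow2 k : (/ 2) ^ k * 2 ^ k = 1.
Proof. rewrite <- Rpow_mult_distr, Rinv_l, pow1; lra. Qed.

Lemma pow2_S_mul k x : 2 ^ S k * x = 2 * (2 ^ k * x).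
Proof. simpl. ring. Qed.

Lemma digit_01 x n : (digit x n = 0 \/ digit x n = 1)%Z.
Proof. apply Zmod2_cases. Qed.

Lemma floorZ_pow2_S x k :
  floorZ (2 ^ S k * x) = (2 * floorZ (2 ^ k * x) + digit x (S k))%Z.
Proof. unfold digit. rewrite pow2_S_mul. apply floorZ_double. Qed.

Lemma floorZ_pow2_le x y n k : (k <= n)%nat ->
  floorZ (2 ^ n * y) = floorZ (2 ^ n * x) -> floorZ (2 ^ k * y) = floorZ (2 ^ k * x).
Proof.
  intros Hk H. induction Hk as [| n Hk IH]; [exact H |].
  apply IH. rewrite (floorZ_half (2 ^ n * y)), (floorZ_half (2 ^ n * x)), <- !pow2_S_mul, H.
  reflexivity.
Qed.

Lemma not_dyadic_pow2_mul x k q : ~ dyadic x -> 2 ^ k * x <> IZR q.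
Proof.
  intros Hnd E. apply Hnd. exists q, k. rewrite <- E. field. apply pow_nonzero. lra.
Qed.

(* The slope of the first [n] terms of the Takagi series on the dyadic interval
   of length 2^-n containing [x]; the paper's [c_x] is [slope x (m - 1)]. *)
Definition slope (x : R) (n : nat) : Z := (Z.of_nat n - 2 * digit_sum x n)%Z.

Lemma slope_S x n : slope x (S n) = (slope x n + 1 - 2 * digit x (S n))%Z.
Proof. unfold slope. simpl digit_sum. lia. Qed.

Lemma c_with_S x p : c_with x (S p) = slope x p.
Proof. unfold c_with, slope. replace (S p - 1)%nat with p by lia. lia. Qed.

Lemma slope_ge x n : (- Z.of_nat n <= slope x n)%Z.
Proof.
  induction n as [| n IH]; [unfold slope; simpl; lia |].
  rewrite slope_S, Nat2Z.inj_succ. destruct (digit_01 x (S n)); lia.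
Qed.

Lemma takagi_term_sub_affine x y k :
  floorZ (2 ^ S k * y) = floorZ (2 ^ S k * x) ->
  takagi_term y k - takagi_term x k = (1 - 2 * IZR (digit x (S k))) * (y - x).
Proof.
  intros E. rewrite !pow2_S_mul in E.
  unfold takagi_term, digit. rewrite pow2_S_mul.
  rewrite <- Rmult_minus_distr_l, (phi_affine_on_half_cell _ _ (eq_sym E)).
  transitivity ((/ 2) ^ k * 2 ^ k * ((1 - 2 * IZR (floorZ (2 * (2 ^ k * x)) mod 2)) * (y - x)));
    [ring | rewrite pow_inv2_mul_pow2; ring].
Qed.

Lemma partial_sum_takagi_sub x y n : floorZ (2 ^ n * y) = floorZ (2 ^ n * x) ->
  partial_sum (fun k => takagi_term y k - takagi_term x k) n = IZR (slope x n) * (y - x).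
Proof.
  intros H.
  assert (Hk : forall k, (k <= n)%nat ->
    partial_sum (fun k => takagi_term y k - takagi_term x k) k = IZR (slope x k) * (y - x)).
  { induction k as [| k IH]; intros Hk.
    - unfold slope. simpl. ring.
    - simpl partial_sum. rewrite IH by lia.
      rewrite takagi_term_sub_affine by (apply (floorZ_pow2_le x y n); [lia | exact H]).
      rewrite slope_S, minus_IZR, plus_IZR, mult_IZR. ring. }
  apply Hk. lia.
Qed.

Lemma takagi_term_pair_le_alternating x y k :
  (digit x (S k) + digit x (S (S k)) = 1)%Z ->
  takagi_term y k + takagi_term y (S k) <= takagi_term x k + takagi_term x (S k).
Proof.
  intros Halt.
  assert (Hpair : forall z, takagi_term z k + takagi_term z (S k)
                            = (/ 2) ^ k * (phi (2 ^ k * z) + phi (2 * (2 ^ k * z)) / 2)).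
  { intros z. unfold takagi_term. rewrite pow2_S_mul. simpl. field. }
  rewrite !Hpair, (phi_pair_alternating (2 ^ k * x)).
  - apply Rmult_le_compat_l; [apply pow_le; lra | apply phi_pair_le].
  - unfold digit in Halt. rewrite <- !pow2_S_mul. exact Halt.
Qed.

Lemma takagi_term_reflect x y n q k : 2 ^ n * y = IZR q - 2 ^ n * x -> (n <= k)%nat ->
  takagi_term y k = takagi_term x k.
Proof.
  intros Hy Hk. unfold takagi_term. f_equal.
  replace k with (n + (k - n))%nat by lia. rewrite pow_add.
  replace (2 ^ n * 2 ^ (k - n) * y) with (2 ^ (k - n) * (2 ^ n * y)) by ring.
  rewrite Hy, pow_IZR.
  replace (IZR (2 ^ Z.of_nat (k - n)) * (IZR q - 2 ^ n * x))
    with (IZR (2 ^ Z.of_nat (k - n) * q) + - (2 ^ n * IZR (2 ^ Z.of_nat (k - n)) * x))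
    by (rewrite mult_IZR; ring).
  now rewrite phi_IZR_add, phi_opp.
Qed.

Lemma takagi_term_add_at_integer x h k q : 2 ^ k * x = IZR q ->
  takagi_term (x + h) k - takagi_term x k = takagi_term h k.
Proof.
  intros Hx. unfold takagi_term.
  rewrite Rmult_plus_distr_l, Hx, phi_IZR_add, phi_IZR. ring.
Qed.

Lemma takagi_term_pow_inv2_lt N k : (k < N)%nat -> takagi_term ((/ 2) ^ N) k = (/ 2) ^ N.
Proof.
  intros Hk. unfold takagi_term.
  replace N with (k + S (N - S k))%nat by lia. rewrite pow_add.
  rewrite <- Rmult_assoc, (Rmult_comm (2 ^ k)), pow_inv2_mul_pow2, Rmult_1_l.
  rewrite <- (Rplus_0_l ((/ 2) ^ S (N - S k))), phi_IZR_add_small, Rplus_0_l;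
    [reflexivity |].
  split; [apply pow_le; lra | apply pow_inv2_le_half].
Qed.

Lemma takagi_term_pow_inv2_ge N k : (N <= k)%nat -> takagi_term ((/ 2) ^ N) k = 0.
Proof.
  intros Hk. unfold takagi_term.
  replace k with (N + (k - N))%nat by lia. rewrite (pow_add 2).
  replace (2 ^ N * 2 ^ (k - N) * (/ 2) ^ N) with ((/ 2) ^ N * 2 ^ N * 2 ^ (k - N)) by ring.
  rewrite pow_inv2_mul_pow2, Rmult_1_l, pow_IZR, phi_IZR. ring.
Qed.

Lemma not_dyadic_floorZ_locally x n : ~ dyadic x ->
  exists delta, 0 < delta /\
    forall y, Rabs (y - x) < delta -> floorZ (2 ^ n * y) = floorZ (2 ^ n * x).
Proof.
  intros Hnd.
  set (z := 2 ^ n * x). destruct (floorZ_spec z) as [F1 F2].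
  assert (Fz : z <> IZR (floorZ z)) by (apply not_dyadic_pow2_mul; exact Hnd).
  set (f := z - IZR (floorZ z)).
  assert (Hf : 0 < f < 1) by (unfold f; lra).
  assert (Hmin : 0 < Rmin f (1 - f)) by (apply Rmin_glb_lt; lra).
  exists (Rmin f (1 - f) * (/ 2) ^ n). split; [apply Rmult_lt_0_compat, pow_lt; lra |].
  intros y Hy. apply floorZ_unique.
  assert (Hclose : Rabs (2 ^ n * y - z) < Rmin f (1 - f)).
  { unfold z. rewrite <- Rmult_minus_distr_l, Rabs_mult, (Rabs_right (2 ^ n))
      by (apply Rle_ge, pow_le; lra).
    apply Rmult_lt_reg_l with ((/ 2) ^ n); [apply pow_lt; lra |].
    rewrite <- Rmult_assoc, pow_inv2_mul_pow2, Rmult_1_l. lra. }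
  apply Rabs_def2 in Hclose. pose proof (Rmin_l f (1 - f)). pose proof (Rmin_r f (1 - f)).
  unfold f in *. lra.
Qed.

Lemma slope_eventually_small x N0 :
  (forall n, (N0 <= n)%nat -> (slope x n * (1 - 2 * digit x (S n)) <= 0)%Z) ->
  forall n, (N0 + Z.to_nat (Z.abs (slope x N0)) <= n)%nat -> (Z.abs (slope x n) <= 1)%Z.
Proof.
  intros Hsign.
  assert (Hdrift : forall i,
    (Z.abs (slope x (N0 + i)) <= Z.max (Z.abs (slope x N0) - Z.of_nat i) 1)%Z).
  { induction i as [| i IH]; [rewrite Nat.add_0_r; lia |].
    specialize (Hsign (N0 + i)%nat ltac:(lia)).
    rewrite Nat.add_succ_r, slope_S.
    destruct (digit_01 x (S (N0 + i))) as [a | a]; rewrite a in *; lia. }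
  intros n Hn. replace n with (N0 + (n - N0))%nat by lia.
  specialize (Hdrift (n - N0)%nat). lia.
Qed.

(* [slope x n] has the parity of [n], so it vanishes at every large even [n]. *)
Lemma pair_cond_of_slope_small x M :
  (forall n, (M <= n)%nat -> (Z.abs (slope x n) <= 1)%Z) ->
  exists m, pair_cond x m /\ c_with x m = 0%Z.
Proof.
  intros Hsmall. set (p := (2 * M)%nat).
  assert (Hzero : forall i, slope x (p + 2 * i) = 0%Z).
  { intros i. specialize (Hsmall (p + 2 * i)%nat ltac:(unfold p; lia)).
    unfold slope, p in *. lia. }
  exists (S p). split; [split; [lia |] |].
  - intros i. pose proof (Hzero (S i)) as Hnext.
    replace (p + 2 * S i)%nat with (S (S (p + 2 * i))) in Hnext by lia.
    rewrite !slope_S, Hzero in Hnext.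
    replace (S p + 2 * i)%nat with (S (p + 2 * i)) by lia.
    replace (S (p + 2 * i) + 1)%nat with (S (S (p + 2 * i))) by lia. lia.
  - rewrite c_with_S. pose proof (Hzero 0%nat) as H0.
    rewrite Nat.mul_0_r, Nat.add_0_r in H0. exact H0.
Qed.

Section TakagiLocalMaxima.

Variable T : R -> R.
Hypothesis T_sum : forall x, infinite_sum (takagi_term x) (T x).

Lemma T_sub_sum x y :
  infinite_sum (fun k => takagi_term y k - takagi_term x k) (T y - T x).
Proof. apply infinite_sum_minus; apply T_sum. Qed.

Lemma T_sub_of_terms_agree x y n :
  floorZ (2 ^ n * y) = floorZ (2 ^ n * x) ->
  (forall k, (n <= k)%nat -> takagi_term y k = takagi_term x k) ->
  T y - T x = IZR (slope x n) * (y - x).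
Proof.
  intros Hfloor Hagree.
  rewrite (infinite_sum_eventually_zero _ _ n (T_sub_sum x y)).
  - apply partial_sum_takagi_sub, Hfloor.
  - intros k Hk. rewrite Hagree by exact Hk. ring.
Qed.

Lemma local_max_of_alternating x p : ~ dyadic x ->
  pair_cond x (S p) -> slope x p = 0%Z -> local_max T x.
Proof.
  intros Hnd [_ Halt] Hslope.
  destruct (not_dyadic_floorZ_locally x p Hnd) as [delta [Hd Hfloor]].
  exists delta. split; [exact Hd |]. intros y Hy.
  set (e := fun k => takagi_term y k - takagi_term x k).
  assert (Hhead : partial_sum e p <= 0).
  { unfold e. rewrite partial_sum_takagi_sub, Hslope by auto. lra. }
  assert (Hpair : forall i, e (p + 2 * i)%nat + e (S (p + 2 * i)) <= 0).
  { intros i. specialize (Halt i).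
    replace (S p + 2 * i)%nat with (S (p + 2 * i)) in Halt by lia.
    replace (S (p + 2 * i) + 1)%nat with (S (S (p + 2 * i))) in Halt by lia.
    pose proof (takagi_term_pair_le_alternating x y _ Halt). unfold e. lra. }
  assert (Hnonpos : T y - T x <= 0).
  { apply (infinite_sum_nonpos_often e); [apply T_sub_sum |].
    intros N. exists (p + 2 * N)%nat.
    split; [lia | apply partial_sum_pairs_nonpos; assumption]. }
  lra.
Qed.

(* For x = K / 2^n and h = 2^-(n+L), T (x + h) - T x = (slope x n + L) h > 0. *)
Lemma dyadic_not_local_max x : dyadic x -> ~ local_max T x.
Proof.
  intros [K [n Hx]] [delta [Hd Hmax]].
  destruct (pow_inv2_lt delta Hd) as [N0 HN0].
  set (L := S (n + N0)). set (h := (/ 2) ^ (n + L)).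
  assert (Hh : 0 < h) by (apply pow_lt; lra).
  assert (Hint : forall i, 2 ^ (n + i) * x = IZR (K * 2 ^ Z.of_nat i)).
  { intros i. rewrite Hx, mult_IZR, <- pow_IZR, pow_add. field. apply pow_nonzero. lra. }
  set (e := fun k => takagi_term (x + h) k - takagi_term x k).
  assert (Htail : forall i, e (n + i)%nat = takagi_term h (n + i)).
  { intros i. apply (takagi_term_add_at_integer x h _ _ (Hint i)). }
  assert (Hfloor : floorZ (2 ^ n * (x + h)) = floorZ (2 ^ n * x)).
  { assert (Hxn : 2 ^ n * x = IZR K).
    { rewrite <- (Nat.add_0_r n), Hint. f_equal. lia. }
    assert (Hhn : 2 ^ n * h = (/ 2) ^ L).
    { unfold h. rewrite pow_add, <- Rmult_assoc, (Rmult_comm (2 ^ n)), pow_inv2_mul_pow2.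
      ring. }
    pose proof (pow_inv2_le_half (n + N0)). pose proof (pow_lt (/ 2) L ltac:(lra)).
    rewrite Rmult_plus_distr_l, Hhn, Hxn.
    rewrite (floorZ_unique K (IZR K)) by lra. apply floorZ_unique. unfold L in *. lra. }
  assert (Hpartial : forall i, (i <= L)%nat ->
    partial_sum e (n + i) = (IZR (slope x n) + INR i) * h).
  { induction i as [| i IH]; intros Hi.
    - rewrite Nat.add_0_r. unfold e. rewrite partial_sum_takagi_sub by exact Hfloor.
      simpl. ring.
    - rewrite Nat.add_succ_r. simpl partial_sum.
      rewrite IH, Htail by lia. unfold h. rewrite takagi_term_pow_inv2_lt, S_INR by lia.
      ring. }
  assert (Hdiff : T (x + h) - T x = (IZR (slope x n) + INR L) * h).
  { rewrite (infinite_sum_eventually_zero e _ (n + L) (T_sub_sum x (x + h))).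
    - apply Hpartial. lia.
    - intros k Hk. replace k with (n + (k - n))%nat by lia.
      rewrite Htail. unfold h. apply takagi_term_pow_inv2_ge. lia. }
  assert (Hle : T (x + h) <= T x).
  { apply Hmax. replace (x + h - x) with h by ring. rewrite Rabs_right by lra.
    apply HN0. lia. }
  assert (Hcoef : 0 < IZR (slope x n) + INR L).
  { rewrite INR_IZR_INZ, <- plus_IZR. apply IZR_lt.
    pose proof (slope_ge x n). unfold L. lia. }
  pose proof (Rmult_lt_0_compat _ _ Hcoef Hh). lra.
Qed.

Lemma local_max_slope_sign x delta n : ~ dyadic x ->
  (forall y, Rabs (y - x) < delta -> T y <= T x) -> (/ 2) ^ n < delta ->
  (slope x n * (1 - 2 * digit x (S n)) <= 0)%Z.
Proof.
  intros Hnd Hmax Hn.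
  set (z := 2 ^ n * x). set (j := floorZ z).
  destruct (floorZ_spec z) as [F1 F2]. fold j in F1, F2.
  assert (Fz : z <> IZR j) by (apply not_dyadic_pow2_mul; exact Hnd).
  assert (Hp : 0 < (/ 2) ^ n) by (apply pow_lt; lra).
  (* y is the mirror image of x in the midpoint of its dyadic interval of level n *)
  set (y := (/ 2) ^ n * (IZR (2 * j + 1) - z)).
  assert (Hy : 2 ^ n * y = IZR (2 * j + 1) - 2 ^ n * x).
  { unfold y. rewrite <- Rmult_assoc, (Rmult_comm (2 ^ n)), pow_inv2_mul_pow2. fold z. ring. }
  assert (Hyx : y - x = (/ 2) ^ n * (IZR (2 * j + 1) - 2 * z)).
  { unfold y, z.
    replace x with ((/ 2) ^ n * 2 ^ n * x) at 2 by (rewrite pow_inv2_mul_pow2; ring). ring. }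
  rewrite plus_IZR, mult_IZR in Hy, Hyx.
  assert (Hdiff : T y - T x = IZR (slope x n) * (y - x)).
  { apply T_sub_of_terms_agree.
    - fold z j. apply floorZ_unique. rewrite Hy. fold z. lra.
    - intros k Hk. apply (takagi_term_reflect x y n (2 * j + 1)); [| exact Hk].
      rewrite Hy, plus_IZR, mult_IZR. reflexivity. }
  assert (Hle : T y <= T x).
  { apply Hmax. rewrite Hyx, Rabs_mult, (Rabs_right ((/ 2) ^ n)) by lra.
    assert (Rabs (2 * IZR j + 1 - 2 * z) < 1) by (apply Rabs_def1; lra).
    nra. }
  set (s := (1 - 2 * digit x (S n))%Z).
  assert (Hsign : 0 < IZR s * (y - x)).
  { pose proof (floorZ_pow2_S x n) as Hdig. rewrite pow2_S_mul in Hdig. fold z j in Hdig.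
    assert (H2z : 2 * z <> IZR (2 * j + 1)).
    { unfold z. rewrite <- pow2_S_mul. apply not_dyadic_pow2_mul. exact Hnd. }
    destruct (floorZ_spec (2 * z)) as [G1 G2]. rewrite Hdig in G1, G2.
    rewrite plus_IZR, mult_IZR in H2z. rewrite Hyx. unfold s.
    destruct (digit_01 x (S n)) as [a | a]; rewrite a in *;
      rewrite ?plus_IZR, ?mult_IZR in G1, G2; simpl; nra. }
  destruct (Z_le_gt_dec (slope x n * s) 0) as [| Hpos]; [assumption | exfalso].
  assert (Hs2 : IZR s * IZR s = 1).
  { rewrite <- mult_IZR. unfold s. destruct (digit_01 x (S n)) as [a | a]; rewrite a; reflexivity. }
  apply Z.gt_lt, IZR_lt in Hpos. rewrite mult_IZR in Hpos.
  assert (Hgain : T y - T x = IZR (slope x n) * IZR s * (IZR s * (y - x))).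
  { rewrite Hdiff.
    transitivity (IZR (slope x n) * (IZR s * IZR s) * (y - x)); [rewrite Hs2 |]; ring. }
  pose proof (Rmult_lt_0_compat _ _ Hpos Hsign). lra.
Qed.

Lemma local_max_pair_cond x : local_max T x ->
  in_A x /\ exists m, pair_cond x m /\ c_with x m = 0%Z.
Proof.
  intros Hmax.
  assert (Hnd : ~ dyadic x) by (intros Hdy; exact (dyadic_not_local_max x Hdy Hmax)).
  destruct Hmax as [delta [Hd Hle]].
  destruct (pow_inv2_lt delta Hd) as [N0 HN0].
  destruct (pair_cond_of_slope_small x _ (slope_eventually_small x N0
              (fun n Hn => local_max_slope_sign x delta n Hnd Hle (HN0 n Hn))))
    as [m Hm].
  split; [split; [exact Hnd | exists m; apply Hm] | exists m; exact Hm].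
Qed.

End TakagiLocalMaxima.

Theorem corollary2p10 :
  forall T : R -> R,
    (forall x : R, infinite_sum (takagi_term x) (T x)) ->
    forall x : R,
      local_max T x <->
      (in_A x /\ exists m : nat, pair_cond x m /\ c_with x m = 0%Z).
Proof.
  intros T T_sum x. split.
  - apply local_max_pair_cond, T_sum.
  - intros [[Hnd _] [[| p] [Hpair Hc]]]; [destruct Hpair; lia |].
    rewrite c_with_S in Hc. exact (local_max_of_alternating T T_sum x p Hnd Hpair Hc).
Qed.
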